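(* Let $\mathcal{X}$ be a finite alphabet with $|\mathcal{X}|\ge 2$, let $P$ be a pmf on $\mathcal{X}$, and let $X_0,X_1,X_2,\dots$ be i.i.d. with law $P$. Let $e:\mathcal{X}\to\{0,1\}^*$ be a prefix-free code with codeword lengths $\ell(x)=|e(x)|\ge 1$, and let $L=\ell(X)$ with $X\sim P$. For the memoryless update scheme defined in the context, the average age satisfies, almost surely, $$\bar A(e)=\mathbb{E}[L]+\frac{\mathbb{E}[L^2]}{2\,\mathbb{E}[L]}-\frac12 .$$
   Context: Memoryless update scheme: the transmitter sends one bit per unit time over a noiseless channel. Set $s_0=0$ and recursively $s_k=s_{k-1}+\ell(X_{s_{k-1}})$ for $k\ge1$: at time $s_{k-1}$ the channel is free, the transmitter takes the current symbol $X_{s_{k-1}}$, and its codeword $e(X_{s_{k-1}})$ is completely received at time $s_k$; symbols $X_t$ arriving while the channel is busy are never sent. The receiver's time index is $U(t)=0$ for $0\le t<s_1$ and $U(t)=s_{k-1}$ for $s_k\le t<s_{k+1}$, $k\ge1$ (i.e. the receiver outputs the most recent fully received symbol, which was observed at time $U(t)$). The age is $A(t)=t-U(t)$ and the average age is $\bar A(e)=\limsup_{T\to\infty}\frac1T\sum_{t=1}^T A(t)$. *)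

From HB Require Import structures.
From mathcomp Require Import all_boot all_order all_algebra.
From mathcomp Require Import all_classical all_reals all_analysis.
Set Implicit Arguments. Unset Strict Implicit. Unset Printing Implicit Defensive.
Import Order.TTheory GRing.Theory Num.Theory.
Local Open Scope classical_set_scope.
Local Open Scope ring_scope.

Section AoI.
Variable X : finType.

Definition prefix_free (e : X -> seq bool) : Prop :=
  forall x y, x != y -> ~~ prefix (e x) (e y).

Definition codelen (e : X -> seq bool) (x : X) : nat := size (e x).

(* transmission completion times, along a fixed realisation xs of the source:
   s_0 = 0, s_k = s_{k-1} + l(x_{s_{k-1}}) *)
Fixpoint sched (e : X -> seq bool) (xs : nat -> X) (k : nat) : nat :=
  match k with
  | 0 => 0
  | k.+1 => sched e xs k + codelen e (xs (sched e xs k))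
  end.

(* index k of the last completed transmission at time t: the largest k with
   s_k <= t (since l >= 1, s_k >= k, so k <= t). *)
Definition last_done (e : X -> seq bool) (xs : nat -> X) (t : nat) : nat :=
  (\max_(k < t.+1 | (sched e xs k <= t)%N) k)%N.

(* receiver time index U(t): 0 if t < s_1, s_{k-1} if s_k <= t < s_{k+1} *)
Definition recv_index (e : X -> seq bool) (xs : nat -> X) (t : nat) : nat :=
  sched e xs (last_done e xs t).-1.

Definition age (e : X -> seq bool) (xs : nat -> X) (t : nat) : nat :=
  t - recv_index e xs t.

(* (1/T) sum_{t=1}^T A(t), as a sequence in T (value at T = 0 irrelevant) *)
Definition avg_age_seq (R : realType) (e : X -> seq bool) (xs : nat -> X)
  (T : nat) : \bar R :=
  ((\sum_(1 <= t < T.+1) (age e xs t)%:R) / T%:R : R)%:E.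

Definition avg_age (R : realType) (e : X -> seq bool) (xs : nat -> X) : \bar R :=
  limn_esup (avg_age_seq R e xs).

End AoI.

Definition mutually_indep {d : measure_display} {T : measurableType d}
  {R : realType} (X : finType) (Pr : probability T R) (Xs : nat -> T -> X) : Prop :=
  forall (S : seq nat) (A : nat -> set X), uniq S ->
    Pr (\bigcap_(i in [set` S]) (Xs i @^-1` A i)) =
    (\prod_(i <- S) Pr (Xs i @^-1` A i))%E.

From HB Require Import structures.
From mathcomp Require Import all_boot all_order all_algebra.
From mathcomp Require Import all_classical all_reals all_analysis.
From mathcomp Require Import ring lra zify.
Import Order.TTheory GRing.Theory Num.Theory.

(* The symbols actually sent, Y_k = X_(s_k), are read at times that depend only on
   Y_0, ..., Y_(k-1); by independence of the source they are therefore i.i.d. with law P.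
   During the k-th transmission, on [s_k, s_(k+1)), the age grows by one per time unit
   starting from L_(k-1), so up to a bounded error the sum of the ages until s_N is
   sum_(k < N) (L_(k-1) L_k + L_k (L_k - 1) / 2), while s_N = sum_(k < N) L_k.  Strong laws
   of large numbers for L_k, L_k^2 and L_k L_(k+1) (the latter split along even and odd k
   into two i.i.d. sequences), each proved from a fourth-moment bound and Borel-Cantelli,
   give the limit (E[L]^2 + (E[L^2] - E[L]) / 2) / E[L]. *)

Set Implicit Arguments. Unset Strict Implicit. Unset Printing Implicit Defensive.
Local Open Scope classical_set_scope.
Local Open Scope ring_scope.

Section IidExpect.
Variables (R : realFieldType) (B : finType) (Q : B -> R).

Fixpoint iid_expect (n : nat) (F : seq B -> R) : R :=
  if n is n'.+1 then \sum_b Q b * iid_expect n' (fun s => F (b :: s)) else F [::].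

Lemma eq_iid_expect n F G :
  (forall s, size s = n -> F s = G s) -> iid_expect n F = iid_expect n G.
Proof.
elim: n F G => [|n IH] F G FG /=; first exact: FG.
apply: eq_bigr => b _; congr (_ * _); apply: IH => s sn.
by apply: FG; rewrite /= sn.
Qed.

Lemma iid_expectD n F G :
  iid_expect n (fun s => F s + G s) = iid_expect n F + iid_expect n G.
Proof.
elim: n F G => [|n IH] F G //=; rewrite -big_split /=.
by apply: eq_bigr => b _; rewrite IH mulrDr.
Qed.

Lemma iid_expectZ n a F : iid_expect n (fun s => a * F s) = a * iid_expect n F.
Proof.
elim: n F => [|n IH] F //=; rewrite mulr_sumr.
by apply: eq_bigr => b _; rewrite IH mulrCA.
Qed.

Hypothesis Q_ge0 : forall b, 0 <= Q b.
Hypothesis Q_sum1 : \sum_b Q b = 1.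

Lemma iid_expect_cst n c : iid_expect n (fun _ => c) = c.
Proof.
elim: n => [|n IH] //=.
by under eq_bigr do rewrite IH; rewrite -mulr_suml Q_sum1 mul1r.
Qed.

Lemma ler_iid_expect n F G :
  (forall s, F s <= G s) -> iid_expect n F <= iid_expect n G.
Proof.
elim: n F G => [|n IH] F G FG /=; first exact: FG.
by apply: ler_sum => b _; apply: ler_wpM2l => //; exact: IH.
Qed.

Lemma iid_expect_behead n F :
  iid_expect n.+1 (fun s => F (behead s)) = iid_expect n F.
Proof. by rewrite /= -[RHS]mulr1 -Q_sum1 mulr_sumr; apply: eq_bigr => b _; rewrite mulrC. Qed.

Section CenteredMoments.
Variable Z : B -> R.
Hypothesis Z_centered : \sum_b Q b * Z b = 0.
Let v := \sum_b Q b * Z b ^+ 2.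
Let m4 := \sum_b Q b * Z b ^+ 4.
Let S (s : seq B) := \sum_(b <- s) Z b.

Lemma iid_expect_sum n : iid_expect n S = 0.
Proof.
elim: n => [|n IH] /=; first by rewrite /S big_nil.
rewrite -[RHS]Z_centered; apply: eq_bigr => b _.
rewrite (eq_iid_expect (G := fun s => Z b + S s)); last by move=> s _; rewrite /S big_cons.
by rewrite iid_expectD iid_expect_cst IH addr0.
Qed.

Lemma iid_expect_sum_sqr n : iid_expect n (fun s => S s ^+ 2) = n%:R * v.
Proof.
elim: n => [|n IH] /=; first by rewrite /S big_nil expr0n mul0r.
transitivity (\sum_b Q b * (Z b ^+ 2 + n%:R * v)).
  apply: eq_bigr => b _; congr (_ * _).
  rewrite (eq_iid_expect (G := fun s => Z b ^+ 2 + (2 * Z b * S s + S s ^+ 2))).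
    by rewrite !iid_expectD iid_expect_cst iid_expectZ iid_expect_sum IH mulr0 add0r.
  by move=> s _; rewrite /S big_cons; ring.
under eq_bigr do rewrite mulrDr.
by rewrite big_split /= -/v -mulr_suml Q_sum1 mul1r -natr1; ring.
Qed.

Lemma iid_expect_sum4_le n :
  iid_expect n (fun s => S s ^+ 4) <= n%:R * m4 + 3 * n%:R ^+ 2 * v ^+ 2.
Proof.
have v_ge0 : 0 <= v by apply: sumr_ge0 => b _; rewrite mulr_ge0 ?sqr_ge0.
elim: n => [|n IH] /=.
  by rewrite /S big_nil expr0n mul0r expr0n /= mulr0 mul0r addr0.
set E3 := iid_expect n (fun s => S s ^+ 3).
set E4 := iid_expect n (fun s => S s ^+ 4).
(* The terms in [Z b ^+ 3 * S s] and [Z b * S s ^+ 3] vanish in expectation. *)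
have -> : \sum_b Q b * iid_expect n (fun s => S (b :: s) ^+ 4) =
    \sum_b Q b * (Z b ^+ 4 + 6 * n%:R * v * Z b ^+ 2 + E4)
    + 4 * E3 * \sum_b Q b * Z b.
  rewrite mulr_sumr -big_split /=; apply: eq_bigr => b _.
  rewrite (eq_iid_expect (G := fun s => Z b ^+ 4 + (4 * Z b ^+ 3 * S s
    + (6 * Z b ^+ 2 * S s ^+ 2 + (4 * Z b * S s ^+ 3 + S s ^+ 4))))).
    by rewrite !iid_expectD iid_expect_cst !iid_expectZ iid_expect_sum
      iid_expect_sum_sqr -/E3 -/E4; ring.
  by move=> s _; rewrite /S big_cons; ring.
rewrite Z_centered mulr0 addr0.
under eq_bigr do rewrite !mulrDr.
rewrite !big_split /= -/m4 -mulr_suml Q_sum1 mul1r.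
have -> : \sum_b Q b * (6 * n%:R * v * Z b ^+ 2) = 6 * n%:R * v * v.
  transitivity (6 * n%:R * v * \sum_b Q b * Z b ^+ 2) => //.
  by rewrite mulr_sumr; apply: eq_bigr => b _; ring.
rewrite -natr1.
have : E4 <= n%:R * m4 + 3 * n%:R ^+ 2 * v ^+ 2 := IH.
have n_ge0 : 0 <= n%:R :> R by [].
nra.
Qed.

End CenteredMoments.

Definition wmean (g : B -> R) := \sum_b Q b * g b.

Definition dev4_bound (g : B -> R) :=
  \sum_b Q b * (g b - wmean g) ^+ 4 + 3 * (\sum_b Q b * (g b - wmean g) ^+ 2) ^+ 2.

Lemma dev4_bound_ge0 g : 0 <= dev4_bound g.
Proof.
apply: addr_ge0; last by rewrite mulr_ge0 ?sqr_ge0.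
by apply: sumr_ge0 => b _; rewrite mulr_ge0 // (_ : 4 = 2 * 2)%N // exprM sqr_ge0.
Qed.

Lemma iid_expect_dev_le (g : B -> R) n (eps : R) : 0 < eps -> (0 < n)%N ->
  iid_expect n (fun s => (eps * n%:R <= `|\sum_(b <- s) g b - n%:R * wmean g|)%R%:R)
    <= dev4_bound g / eps ^+ 4 / n%:R ^+ 2.
Proof.
move=> eps_gt0 n_gt0.
have n_ge1 : 1 <= n%:R :> R by rewrite ler1n.
pose Z b := g b - wmean g.
have Z_centered : \sum_b Q b * Z b = 0.
  rewrite /Z; under eq_bigr do rewrite mulrBr.
  by rewrite sumrB -mulr_suml Q_sum1 mul1r subrr.
set c := eps * n%:R.
have c_gt0 : 0 < c by rewrite mulr_gt0 // ltr0n.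
rewrite (@eq_iid_expect n _ (fun s => (c <= `|\sum_(b <- s) Z b|)%R%:R)); last first.
  move=> s sn; rewrite /Z big_split /= sumrN big_const_seq count_predT sn.
  by rewrite iter_addr_0 mulr_natl.
apply: (@le_trans _ _ (iid_expect n (fun s => c ^-1 ^+ 4 * (\sum_(b <- s) Z b) ^+ 4))).
  apply: ler_iid_expect => s; set S := \sum_(b <- s) Z b.
  have S4_ge0 : 0 <= S ^+ 4 by rewrite (_ : 4 = 2 * 2)%N // exprM sqr_ge0.
  case: (boolP (c <= `|S|)) => cS /=; last by rewrite mulr_ge0 // exprn_ge0 // invr_ge0 ltW.
  rewrite exprVn ler_pdivlMl ?exprn_gt0 // mulr1 -[S ^+ 4]ger0_norm // normrX.
  by rewrite lerXn2r // nnegrE ltW.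
rewrite iid_expectZ.
have := iid_expect_sum4_le Z_centered n; rewrite -/Z.
set m4 := \sum_b _ * _ ^+ 4; set v := \sum_b _ * _ ^+ 2; set E := iid_expect _ _ => E_le.
have m4_ge0 : 0 <= m4.
  by apply: sumr_ge0 => b _; rewrite mulr_ge0 // (_ : 4 = 2 * 2)%N // exprM sqr_ge0.
have -> : c ^-1 ^+ 4 * E = E / eps ^+ 4 / n%:R ^+ 2 / n%:R ^+ 2.
  by rewrite /c; field; rewrite ?gt_eqF // (lt_le_trans _ n_ge1).
rewrite ler_pdivrMr ?exprn_gt0 ?(lt_le_trans _ n_ge1) //.
rewrite !ler_pdivrMr ?exprn_gt0 ?(lt_le_trans _ n_ge1) //.
have : n%:R * m4 <= n%:R ^+ 2 * m4.
  by rewrite ler_wpM2r // expr2 ler_peMl // (le_trans ler01 n_ge1).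
rewrite /dev4_bound -/Z -/m4 -/v.
have -> : (m4 + 3 * v ^+ 2) / eps ^+ 4 / n%:R ^+ 2 * n%:R ^+ 2 * n%:R ^+ 2 * eps ^+ 4
    = (m4 + 3 * v ^+ 2) * n%:R ^+ 2.
  by field; rewrite ?gt_eqF // (lt_le_trans _ n_ge1).
have : 0 <= v ^+ 2 by rewrite sqr_ge0.
lra.
Qed.

End IidExpect.

Section IidWords.
Variables (R : realFieldType) (B : finType).

Fixpoint words (n : nat) : seq (seq B) :=
  if n is n'.+1 then [seq b :: s | b <- enum B, s <- words n'] else [:: [::]].

Lemma mem_words n s : (s \in words n) = (size s == n).
Proof.
elim: n s => [|n IH] s /=; first by rewrite inE; case: s.
apply/allpairsP/idP => [[[b t] /= [_ t_in ->]]|]; first by rewrite /= eqSS -IH.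
by case: s => [|b s] //= sn; exists (b, s); rewrite mem_enum IH.
Qed.

Lemma uniq_words n : uniq (words n).
Proof.
elim: n => [|n IH] //=; apply: allpairs_uniq => //; first exact: enum_uniq.
by move=> [b s] [c t] _ _ /= [-> ->].
Qed.

Lemma iid_expect_words (Q : B -> R) n F :
  iid_expect Q n F = \sum_(s <- words n) (\prod_(b <- s) Q b) * F s.
Proof.
elim: n F => [|n IH] F /=; first by rewrite big_seq1 big_nil mul1r.
rewrite big_allpairs_dep /= -big_enum /=.
apply: eq_bigr => b _; rewrite IH mulr_sumr; apply: eq_bigr => s _.
by rewrite big_cons mulrA.
Qed.

Variables (Q : B -> R) (x0 : B).
Hypothesis Q_ge0 : forall b, 0 <= Q b.
Hypothesis Q_sum1 : \sum_b Q b = 1.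

Let Q2 (p : B * B) := Q p.1 * Q p.2.

Definition unpair (s : seq (B * B)) : seq B := flatten [seq [:: p.1; p.2] | p <- s].

Lemma iid_expect_double n F :
  iid_expect Q n.*2 F = iid_expect Q2 n (fun s => F (unpair s)).
Proof.
elim: n F => [|n IH] F //=.
transitivity (\sum_b \sum_c Q b * Q c * iid_expect Q n.*2 (fun s => F [:: b, c & s])).
  by apply: eq_bigr => b _; rewrite mulr_sumr; apply: eq_bigr => c _; rewrite mulrA.
by rewrite pair_big /=; apply: eq_bigr => -[b c] _; rewrite IH.
Qed.

Definition pair_sum (g : B -> R) n (s : seq B) :=
  \sum_(k < n) g (nth x0 s k.*2) * g (nth x0 s k.*2.+1).

Lemma pair_sum_unpair g n s : size s = n ->
  pair_sum g n (unpair s) = \sum_(p <- s) g p.1 * g p.2.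
Proof.
elim: s n => [|p s IH] n <-; first by rewrite /pair_sum big_ord0 big_nil.
rewrite /pair_sum big_ord_recl big_cons /=; congr (_ + _).
by rewrite -(IH (size s)) //; apply: eq_bigr => k _; rewrite /bump /= doubleS.
Qed.

Lemma wmean_pair g : wmean Q2 (fun p => g p.1 * g p.2) = wmean Q g ^+ 2.
Proof.
rewrite /wmean /Q2 expr2 mulr_suml.
rewrite -(pair_big predT predT (fun b c => Q b * Q c * (g b * g c))) /=.
apply: eq_bigr => b _; rewrite mulr_sumr; apply: eq_bigr => c _; ring.
Qed.

Definition pair_dev_bound g := dev4_bound Q2 (fun p => g p.1 * g p.2).

Lemma pair_dev_bound_ge0 g : 0 <= pair_dev_bound g.
Proof. by apply: dev4_bound_ge0 => p; exact: mulr_ge0. Qed.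

Lemma iid_expect_pair_dev_le g n (eps : R) : 0 < eps -> (0 < n)%N ->
  iid_expect Q n.*2
    (fun s => (eps * n%:R <= `|pair_sum g n s - n%:R * wmean Q g ^+ 2|)%R%:R)
  <= pair_dev_bound g / eps ^+ 4 / n%:R ^+ 2.
Proof.
move=> eps_gt0 n_gt0; rewrite iid_expect_double -wmean_pair.
have Q2_ge0 p : 0 <= Q2 p by exact: mulr_ge0.
have Q2_sum1 : \sum_p Q2 p = 1.
  rewrite -(pair_big predT predT (fun b c => Q b * Q c)) /=.
  by under eq_bigr do rewrite -mulr_sumr Q_sum1 mulr1.
rewrite (@eq_iid_expect _ _ Q2 n _
  (fun s => (eps * n%:R <= `|\sum_(p <- s) g p.1 * g p.2
                              - n%:R * wmean Q2 (fun p => g p.1 * g p.2)|)%R%:R)).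
  exact: iid_expect_dev_le Q2_ge0 Q2_sum1 _ _ _ eps_gt0 n_gt0.
by move=> s sn; rewrite pair_sum_unpair.
Qed.

Lemma iid_expect_pair_dev_behead_le g n (eps : R) : 0 < eps -> (0 < n)%N ->
  iid_expect Q n.*2.+1
    (fun s => (eps * n%:R <= `|pair_sum g n (behead s) - n%:R * wmean Q g ^+ 2|)%R%:R)
  <= pair_dev_bound g / eps ^+ 4 / n%:R ^+ 2.
Proof.
move=> eps_gt0 n_gt0.
pose F s := (eps * n%:R <= `|pair_sum g n s - n%:R * wmean Q g ^+ 2|)%R%:R : R.
by rewrite (iid_expect_behead Q_sum1 n.*2 F) iid_expect_pair_dev_le.
Qed.

End IidWords.

Lemma sum_inv_sqr_le (R : realFieldType) n :
  \sum_(k < n.+1) ((k.+1)%:R ^+ 2)^-1 <= 2 - (n.+1)%:R^-1 :> R.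
Proof.
elim: n => [|n IH]; first by rewrite big_ord_recr big_ord0 /= add0r expr1n invr1; lra.
rewrite big_ord_recr /=.
set a := (n.+1)%:R : R; have a_ge1 : 1 <= a by rewrite ler1n.
have -> : (n.+2)%:R = a + 1 :> R by rewrite -natr1.
have step : ((a + 1) ^+ 2)^-1 <= a^-1 - (a + 1)^-1.
  have -> : a^-1 - (a + 1)^-1 = (a * (a + 1))^-1 by field; rewrite !gt_eqF //; lra.
  by rewrite lef_pV2 ?posrE ?exprn_gt0 ?mulr_gt0 //; lra.
by apply: le_trans (lerD IH step) _; rewrite addrA subrK.
Qed.

Lemma nneseries_inv_sqr_lty (R : realType) (C : R) : 0 <= C ->
  (\sum_(k <oo) (C / (k.+1)%:R ^+ 2)%:E < +oo)%E.
Proof.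
move=> C_ge0.
have term_ge0 k : (0 <= (C / (k.+1)%:R ^+ 2)%:E)%E by rewrite lee_fin divr_ge0 ?sqr_ge0.
apply: (@le_lt_trans _ _ (2 * C)%:E); last exact: ltry.
have nd := @ereal_nondecreasing_series _ _ xpredT 0%N (fun k _ _ => term_ge0 k).
rewrite (cvg_lim _ (ereal_nondecreasing_cvgn nd)) //.
apply: ge_ereal_sup => _ [[|n] _ <-] /=; rewrite sumEFin lee_fin.
  by rewrite big_geq // mulr_ge0.
rewrite big_mkord -mulr_sumr mulrC ler_wpM2r //.
by apply: le_trans (sum_inv_sqr_le R n) _; rewrite lerBlDr lerDl.
Qed.

Lemma negligible_infinitely_often d (T : measurableType d) (R : realType)
    (mu : {measure set T -> \bar R}) (F : nat -> set T) (C : R) :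
  0 <= C -> (forall k, measurable (F k)) ->
  (forall k, (mu (F k) <= (C / (k.+1)%:R ^+ 2)%:E)%E) ->
  mu.-negligible [set w | ~ exists N, forall k, (N <= k)%N -> ~ F k w].
Proof.
move=> C_ge0 mF muF.
apply: (@negligibleS _ _ _ _ (lim_sup_set F)).
  move=> w /= Fw n _; apply: contrapT => nFw; apply: Fw.
  by exists n => k nk Fk; apply: nFw; exists k.
apply/negligibleP; first by apply: bigcap_measurable => // k _; exact: bigcup_measurable.
apply: lim_sup_set_cvg0 => //; apply: le_lt_trans (nneseries_inv_sqr_lty C_ge0).
by apply: lee_nneseries => // k _ _; exact: measure_ge0.
Qed.

Lemma limn_esup_EFin (R : realType) (u : nat -> R) (c : R) :
  (forall eps, 0 < eps -> exists N, forall n, (N <= n)%N -> `|u n - c| <= eps) ->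
  limn_esup (fun n => (u n)%:E) = c%:E.
Proof.
move=> uc.
have u_cvg : (fun n => (u n)%:E) @ \oo --> c%:E.
  apply: cvg_EFin; first exact: nearW.
  apply/cvgrPdist_le => eps eps_gt0; have [N uN] := uc eps eps_gt0.
  by exists N => // n /= Nn; rewrite distrC; exact: uN.
by rewrite is_cvg_limn_esupE; [exact: cvg_lim | apply/cvg_ex; exists c%:E].
Qed.

Lemma exists_mulr_natr_ge (R : archiRealFieldType) (x eps : R) :
  0 < eps -> exists N : nat, x <= eps * N%:R.
Proof.
move=> eps_gt0; exists (Num.Def.archi_bound (`|x| / eps)).
rewrite mulrC -ler_pdivrMr //.
have x_eps_ge0 : 0 <= `|x| / eps := divr_ge0 (normr_ge0 x) (ltW eps_gt0).
apply: le_trans _ (ltW (archi_boundP x_eps_ge0)).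
by rewrite ler_pM2r ?invr_gt0 // ler_norm.
Qed.

Section MeanConvergence.
Variable R : archiRealFieldType.

Definition mean_cvg (u : nat -> R) (c : R) :=
  forall eps, 0 < eps -> exists N, forall n, (N <= n)%N ->
    `|\sum_(k < n) u k - n%:R * c| <= eps * n%:R.

Lemma mean_cvg_invn (u : nat -> R) (c : R) :
  (forall i, exists N, forall n, (N <= n)%N ->
     `|\sum_(k < n.+1) u k - n.+1%:R * c| < (i.+1)%:R^-1 * n.+1%:R) ->
  mean_cvg u c.
Proof.
move=> uc eps eps_gt0.
have [i epsi] : exists i, (i.+1)%:R^-1 <= eps.
  have [i epsi] := exists_mulr_natr_ge 1 eps_gt0; exists i.
  rewrite -[_^-1]mul1r ler_pdivrMr ?ltr0n // (le_trans epsi) //.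
  by apply: ler_wpM2l; [exact: ltW | rewrite ler_nat].
have [N uN] := uc i.
exists N.+1 => -[|n] // Nn.
by apply/ltW; apply: lt_le_trans (uN n Nn) _; rewrite ler_wpM2r.
Qed.

Lemma sum_even_odd (u : nat -> R) m :
  \sum_(k < m.*2) u k = \sum_(k < m) u k.*2 + \sum_(k < m) u k.*2.+1.
Proof.
elim: m => [|m IH]; first by rewrite !big_ord0 addr0.
by rewrite doubleS !big_ord_recr /= IH; ring.
Qed.

Lemma mean_cvg_even_odd (u : nat -> R) (c B : R) : (forall k, `|u k| <= B) ->
  mean_cvg (fun k => u k.*2) c -> mean_cvg (fun k => u k.*2.+1) c -> mean_cvg u c.
Proof.
move=> u_le even_cvg odd_cvg eps eps_gt0.
have eps2_gt0 : 0 < eps / 2 by rewrite divr_gt0.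
have [N1 HN1] := even_cvg _ eps2_gt0; have [N2 HN2] := odd_cvg _ eps2_gt0.
have [N3 HN3] := exists_mulr_natr_ge (B + `|c|) eps2_gt0.
exists (maxn (maxn N1 N2).*2 N3) => n; rewrite geq_max -geq_half_double geq_max.
move=> /andP [/andP [N1m N2m] N3n]; set m := n./2 in N1m N2m *.
have sum_split : \sum_(k < n) u k - n%:R * c =
    (\sum_(k < m) u k.*2 - m%:R * c) + (\sum_(k < m) u k.*2.+1 - m%:R * c)
    + (odd n)%:R * (u m.*2 - c).
  have n_eq : n = (odd n + m.*2)%N by rewrite odd_double_half.
  rewrite [in LHS]n_eq; case: (odd n) => /=.
    by rewrite add1n big_ord_recr /= sum_even_odd -natr1 -muln2 natrM; ring.
  by rewrite add0n sum_even_odd -muln2 natrM mul0r addr0; ring.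
have rest : `|(odd n)%:R * (u m.*2 - c)| <= eps / 2 * n%:R.
  apply: le_trans (_ : _ <= B + `|c|) _.
    case: (odd n); rewrite ?mul1r ?mul0r ?normr0 ?(le_trans (ler_normB _ _)) ?lerD2r //.
    by rewrite addr_ge0 // (le_trans _ (u_le 0%N)).
  by apply: le_trans HN3 (ler_wpM2l (ltW eps2_gt0) _); rewrite ler_nat.
have m2n : eps / 2 * (m%:R * 2) <= eps / 2 * n%:R.
  by apply: ler_wpM2l; [exact: ltW | rewrite -natrM ler_nat muln2 -geq_half_double].
have := HN1 m N1m; have := HN2 m N2m.
rewrite sum_split; move: rest m2n.
set x := _ - _; set y := _ - _; set z := _ * _.
move=> hz hmn hy hx.
apply: le_trans (ler_normD _ _) _; apply: le_trans (lerD (ler_normD _ _) hz) _.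
lra.
Qed.

End MeanConvergence.

Lemma double_sum_subn (R : comNzRingType) (c l p : nat) : (p <= c)%N ->
  2 * \sum_(c <= t < c + l) ((t - p)%N)%:R = 2 * l%:R * (c - p)%:R + l%:R ^+ 2 - l%:R :> R.
Proof.
move=> pc; elim: l => [|l IH].
  by rewrite addn0 big_geq // mulr0 mul0r !add0r expr0n subr0.
rewrite addnS big_nat_recr /= ?leq_addr // mulrDr IH.
rewrite !natrB ?(leq_trans pc (leq_addr _ _)) // natrD -!natr1; ring.
Qed.

Section Schedule.
Variables (X : finType) (e : X -> seq bool) (xs : nat -> X).
Hypothesis codelen_ge1 : forall x, (1 <= codelen e x)%N.
Local Notation s := (sched e xs).

Definition sent_len k := codelen e (xs (s k)).

Definition max_len := (\max_x codelen e x)%N.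

Lemma sent_len_le k : (sent_len k <= max_len)%N.
Proof. exact: leq_bigmax. Qed.

Lemma max_len_gt0 : (0 < max_len)%N.
Proof. exact: leq_trans (codelen_ge1 _) (sent_len_le 0). Qed.

Lemma sched_lt k : (s k < s k.+1)%N.
Proof. by rewrite /= -[X in (X < _)%N]addn0 ltn_add2l codelen_ge1. Qed.

Lemma sched_mono : {homo s : i j / (i <= j)%N}.
Proof. by apply: homo_leq => [//|? ? ? /leq_trans|k]; [apply | exact/ltnW/sched_lt]. Qed.

Lemma sched_ge k : (k <= s k)%N.
Proof. by elim: k => [|k IH] //; rewrite (leq_ltn_trans IH) // sched_lt. Qed.

Lemma sched_le k : (s k <= k * max_len)%N.
Proof. by elim: k => [|k IH] //=; rewrite mulSn addnC leq_add // sent_len_le. Qed.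

Lemma sched_cycle t : exists k, (s k <= t < s k.+1)%N.
Proof.
elim: t => [|t [k /andP [skt tsk]]]; first by exists 0%N; exact: (sched_lt 0).
case: (ltnP t.+1 (s k.+1)) => [tsk'|skt']; first by exists k; rewrite tsk' (leq_trans skt).
exists k.+1; have -> : t.+1 = s k.+1 by apply/eqP; rewrite eqn_leq skt' tsk.
by rewrite leqnn sched_lt.
Qed.

Lemma cycle_index_ge N0 N t : (N0.+1 * max_len <= t)%N -> (t < s N.+1)%N -> (N0 <= N)%N.
Proof.
move=> N0t tsN; rewrite -ltnS -(leq_pmul2r max_len_gt0).
exact: leq_trans N0t (ltnW (leq_trans tsN (sched_le _))).
Qed.

Lemma last_done_cycle t k : (s k <= t < s k.+1)%N -> last_done e xs t = k.
Proof.
move=> /andP [skt tsk]; apply/eqP; rewrite eqn_leq; apply/andP; split.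
  apply/bigmax_leqP => i /= sit; rewrite leqNgt; apply/negP => ki.
  by have := sched_mono ki; lia.
have kt : (k < t.+1)%N by rewrite ltnS (leq_trans (sched_ge k)).
exact: (@leq_bigmax_cond _ (fun i : 'I_t.+1 => (s i <= t)%N) val (Ordinal kt)).
Qed.

Lemma age_cycle t k : (s k <= t < s k.+1)%N -> age e xs t = (t - s k.-1)%N.
Proof. by move=> tk; rewrite /age /recv_index (last_done_cycle tk). Qed.

Lemma age_le t : (age e xs t <= 2 * max_len)%N.
Proof.
have [k tk] := sched_cycle t; rewrite (age_cycle tk); case/andP: tk.
case: k => [|k] /= _; have := sent_len_le 0; rewrite /sent_len /=; first lia.
by have := sent_len_le k; have := sent_len_le k.+1; rewrite /sent_len /=; lia.
Qed.

Variable R : realType.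

Definition age_sum T : R := \sum_(t < T) (age e xs t)%:R.
Definition len_sum N : R := \sum_(k < N) (sent_len k)%:R.
Definition len_sqr_sum N : R := \sum_(k < N) (sent_len k)%:R ^+ 2.
Definition len_cross_sum N : R := \sum_(k < N) (sent_len k)%:R * (sent_len k.+1)%:R.

Lemma age_sum_shift T : \sum_(1 <= t < T.+1) (age e xs t)%:R = age_sum T.+1.
Proof.
rewrite /age_sum -(big_mkord xpredT (fun t => (age e xs t)%:R)).
by rewrite (big_ltn (m := 0%N)) // {2}/age sub0n add0r.
Qed.

Lemma age_sum_cat T T' : (T <= T')%N ->
  age_sum T' = age_sum T + \sum_(T <= t < T') (age e xs t)%:R.
Proof.
move=> TT'; rewrite /age_sum -!(big_mkord xpredT (fun t => (age e xs t)%:R)).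
by rewrite (big_cat_nat _ (n := T)).
Qed.

Lemma len_sumE N : len_sum N = (s N)%:R.
Proof.
elim: N => [|N IH]; first by rewrite /len_sum big_ord0.
by rewrite /len_sum big_ord_recr -/(len_sum N) IH /= natrD.
Qed.

(* Cycle [k] contributes [l_(k-1) l_k + l_k (l_k - 1) / 2] to the sum of ages; the
   correction term [l_N (s_N - s_(N-1))] is the cross product [l_(N-1) l_N], which
   already enters [len_cross_sum N] although cycle [N] has not been counted. *)
Lemma age_sum_sched N :
  2 * age_sum (s N) + 2 * (sent_len N)%:R * (s N - s N.-1)%:R
  = 2 * len_cross_sum N + len_sqr_sum N - len_sum N.
Proof.
elim: N => [|N IH].
  by rewrite /age_sum /len_cross_sum /len_sqr_sum /len_sum !big_ord0 subnn; ring.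
have cycleN : age_sum (s N.+1) =
    age_sum (s N) + \sum_(s N <= t < s N.+1) ((t - s N.-1)%N)%:R.
  rewrite (age_sum_cat (ltnW (sched_lt N))); congr (_ + _).
  by apply: eq_big_nat => t tN; rewrite (age_cycle tN).
have sN1 : (s N.-1 <= s N)%N by apply: sched_mono; exact: leq_pred.
rewrite cycleN mulrDr [s N.+1]/= double_sum_subn //.
rewrite /len_cross_sum /len_sqr_sum /len_sum !big_ord_recr /=.
rewrite -/(len_cross_sum N) -/(len_sqr_sum N) -/(len_sum N) addKn -/(sent_len N).
move: IH; lra.
Qed.

Lemma age_sum_cycle_bounds N T : (s N <= T < s N.+1)%N ->
  age_sum (s N) <= age_sum T.+1 <= age_sum (s N) + 2 * max_len%:R ^+ 2.
Proof.
move=> /andP [sNT TsN]; rewrite (age_sum_cat (leqW sNT)) lerDl sumr_ge0 //= lerD2l.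
apply: (@le_trans _ _ (\sum_(s N <= t < T.+1) (2 * max_len)%:R)).
  by apply: ler_sum => t _; rewrite ler_nat age_le.
rewrite sumr_const_nat -mulr_natl natrM.
have : (T.+1 - s N <= max_len)%N by move: TsN; have := sent_len_le N; rewrite /sent_len /=; lia.
rewrite -(ler_nat R) => Tmax; have M_ge0 : 0 <= max_len%:R :> R by [].
nra.
Qed.

Section Asymptotics.
Variables (a b d : R).
Let g := a ^+ 2 + (b - a) / 2.
Let M : R := max_len%:R.

Lemma age_sum_sched_near N :
  `|len_sum N - N%:R * a| <= d * N%:R ->
  `|len_sqr_sum N - N%:R * b| <= d * N%:R ->
  `|len_cross_sum N - N%:R * a ^+ 2| <= d * N%:R ->
  `|age_sum (s N) - N%:R * g| <= 2 * (d * N%:R) + M ^+ 2.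
Proof.
move=> hl hs hc; have := age_sum_sched N; rewrite -mulrA.
set D := (sent_len N)%:R * _ => sched_id.
have D_ge0 : 0 <= D by rewrite mulr_ge0.
have D_le : D <= M ^+ 2.
  rewrite /D /M expr2 -!natrM ler_nat leq_mul ?sent_len_le //.
  case: (N) => [|n] /=; first by [].
  by have := sent_len_le n; rewrite /sent_len; lia.
move: hl hs hc; rewrite /g !ler_norml => /andP [? ?] /andP [? ?] /andP [? ?].
by apply/andP; split; lra.
Qed.

Lemma age_sum_time_near N T : 0 <= a -> (s N <= T < s N.+1)%N ->
  `|len_sum N - N%:R * a| <= d * N%:R ->
  `|len_sqr_sum N - N%:R * b| <= d * N%:R ->
  `|len_cross_sum N - N%:R * a ^+ 2| <= d * N%:R ->
  `|a * age_sum T.+1 - g * T%:R|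
    <= 3 * a * M ^+ 2 + `|g| * M + (2 * a + `|g|) * (d * N%:R).
Proof.
move=> a_ge0 NT hl hs hc.
have /andP [cycle_ge cycle_le] := age_sum_cycle_bounds NT.
have near_sN := age_sum_sched_near hl hs hc.
have /andP [sNT TsN] := NT.
have T_le : T%:R <= (s N)%:R + M.
  by rewrite /M -natrD ler_nat; move: TsN; have := sent_len_le N; rewrite /sent_len /=; lia.
rewrite len_sumE in hl.
set x1 := age_sum T.+1 - age_sum (s N); set x2 := age_sum (s N) - N%:R * g.
set x3 := N%:R * a - (s N)%:R; set x4 := (s N)%:R - T%:R : R.
have -> : a * age_sum T.+1 - g * T%:R = a * x1 + a * x2 + g * x3 + g * x4.
  by rewrite /x1 /x2 /x3 /x4; ring.
have tri : `|a * x1 + a * x2 + g * x3 + g * x4|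
    <= `|a| * `|x1| + `|a| * `|x2| + `|g| * `|x3| + `|g| * `|x4|.
  rewrite -!normrM.
  apply: le_trans (ler_normD _ _) _; rewrite lerD2r.
  apply: le_trans (ler_normD _ _) _; rewrite lerD2r.
  exact: ler_normD.
apply: le_trans tri _; rewrite ger0_norm //.
have -> : 3 * a * M ^+ 2 + `|g| * M + (2 * a + `|g|) * (d * N%:R)
    = a * (2 * M ^+ 2) + a * (2 * (d * N%:R) + M ^+ 2) + `|g| * (d * N%:R) + `|g| * M.
  by ring.
rewrite !lerD ?ler_wpM2l //.
- by rewrite ger0_norm /x1 ?subr_ge0 // lerBlDl.
- by rewrite /x3 distrC.
- by rewrite /x4 distrC ger0_norm ?subr_ge0 ?ler_nat // lerBlDl.
Qed.

End Asymptotics.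

Lemma avg_ageE (a b : R) : 1 <= a ->
  mean_cvg (fun k => (sent_len k)%:R) a ->
  mean_cvg (fun k => (sent_len k)%:R ^+ 2) b ->
  mean_cvg (fun k => (sent_len k)%:R * (sent_len k.+1)%:R) (a ^+ 2) ->
  avg_age R e xs = (a + b / (2 * a) - 2^-1)%:E.
Proof.
move=> a_ge1 len_cvg sqr_cvg cross_cvg.
have a_gt0 : 0 < a := lt_le_trans ltr01 a_ge1.
set g := a ^+ 2 + (b - a) / 2; set M : R := max_len%:R.
set K0 := 3 * a * M ^+ 2 + `|g| * M; set Kg := 2 * a + `|g|.
have Kg_gt0 : 0 < Kg by rewrite ltr_wpDr // mulr_gt0.
rewrite /avg_age /avg_age_seq; apply: limn_esup_EFin => eps eps_gt0.
pose d := eps / (2 * Kg); have d_gt0 : 0 < d by rewrite divr_gt0 ?mulr_gt0.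
have [N1 HN1] := len_cvg d d_gt0; have [N2 HN2] := sqr_cvg d d_gt0.
have [N3 HN3] := cross_cvg d d_gt0.
have [T1 HT1] := exists_mulr_natr_ge (2 * K0) eps_gt0.
exists (maxn ((maxn N1 (maxn N2 N3)).+1 * max_len) T1.+1) => T.
rewrite geq_max => /andP [TN TT1].
have [N /andP [sNT TsN]] := sched_cycle T.
have /and3P [N1N N2N N3N] : [&& N1 <= N, N2 <= N & N3 <= N]%N.
  by rewrite -!geq_max; exact: cycle_index_ge TN TsN.
have := age_sum_time_near (ltW a_gt0) (introT andP (conj sNT TsN))
  (HN1 N N1N) (HN2 N N2N) (HN3 N N3N); rewrite -/g -/M -/K0 -/Kg => near.
have T_gt0 : 0 < T%:R :> R by rewrite ltr0n (leq_trans _ TT1).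
have NT : N%:R <= T%:R :> R by rewrite ler_nat (leq_trans (sched_ge N)).
rewrite age_sum_shift.
have -> : age_sum T.+1 / T%:R - (a + b / (2 * a) - 2^-1)
    = (a * age_sum T.+1 - g * T%:R) / (a * T%:R).
  by rewrite /g; field; rewrite !gt_eqF.
rewrite normrM normfV (gtr0_norm (mulr_gt0 a_gt0 T_gt0)) ler_pdivrMr ?mulr_gt0 //.
apply: le_trans near _.
have -> : Kg * (d * N%:R) = eps / 2 * N%:R by rewrite /d; field; rewrite gt_eqF.
have : eps / 2 * N%:R <= eps / 2 * T%:R.
  by apply: ler_wpM2l NT; rewrite divr_ge0 ?ltW.
have : eps * T%:R <= eps * (a * T%:R).
  by apply: ler_wpM2l; [exact: ltW | rewrite ler_peMl // ltW].
have : 2 * K0 <= eps * T%:R.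
  by apply: le_trans HT1 (ler_wpM2l (ltW eps_gt0) _); rewrite ler_nat ltnW.
lra.
Qed.

End Schedule.

Section SentSymbols.
Variables (d : measure_display) (T : measurableType d) (R : realType)
  (Pr : probability T R) (X : finType) (P : X -> R) (Xs : nat -> T -> X)
  (e : X -> seq bool) (x0 : X).
Hypothesis Xs_measurable : forall t x, measurable (Xs t @^-1` [set x]).
Hypothesis Xs_law : forall t x, Pr (Xs t @^-1` [set x]) = (P x)%:E.
Hypothesis Xs_indep : mutually_indep Pr Xs.
Hypothesis codelen_ge1 : forall x, (1 <= codelen e x)%N.

Definition sent k w := Xs (sched e (Xs^~ w) k) w.

Definition sent_seq m w := [seq sent k w | k <- iota 0 m].

Lemma size_sent_seq m w : size (sent_seq m w) = m.
Proof. by rewrite size_map size_iota. Qed.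

Lemma nth_sent_seq m w i : (i < m)%N -> nth x0 (sent_seq m w) i = sent i w.
Proof. by move=> im; rewrite (nth_map 0%N) ?size_iota // nth_iota. Qed.

Lemma sum_sent_seq m w (g : X -> R) :
  \sum_(b <- sent_seq m w) g b = \sum_(k < m) g (sent k w).
Proof. by rewrite big_map -(big_mkord xpredT (fun k => g (sent k w))) /index_iota subn0. Qed.

(* If the first symbols sent are those of the word [s], its [j]-th letter was read at
   the deterministic time [word_time s j]: the event [sent_seq m w = s] only involves
   the source at the distinct times [word_time s j], [j < m]. *)
Definition word_time (s : seq X) j := (\sum_(i < j) codelen e (nth x0 s i))%N.

Lemma word_timeS s j : word_time s j.+1 = (word_time s j + codelen e (nth x0 s j))%N.
Proof. by rewrite /word_time big_ord_recr. Qed.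

Lemma word_time_inj s : injective (word_time s).
Proof.
apply: incn_inj; apply: leq_mono; apply: homo_ltn; first exact: ltn_trans.
by move=> i; rewrite word_timeS -[X in (X < _)%N]addn0 ltn_add2l codelen_ge1.
Qed.

Lemma sched_word_time w s j : (forall i, (i < j)%N -> sent i w = nth x0 s i) ->
  sched e (Xs^~ w) j = word_time s j.
Proof.
elim: j => [|j IH] sent_s; first by rewrite /word_time big_ord0.
have IHj : sched e (Xs^~ w) j = word_time s j by apply: IH => i /ltnW; exact: sent_s.
by rewrite /= IHj word_timeS -(sent_s j (ltnSn j)) /sent IHj.
Qed.

Lemma sent_seqP m w s : size s = m ->
  sent_seq m w = s <-> forall j, (j < m)%N -> Xs (word_time s j) w = nth x0 s j.
Proof.
move=> sm; split=> [<- j jm|Xs_s].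
  rewrite nth_sent_seq // -(@sched_word_time w) // => i ij.
  by rewrite nth_sent_seq // (ltn_trans ij).
have sent_s j : (j < m)%N -> sent j w = nth x0 s j.
  elim/ltn_ind: j => j IH jm; rewrite /sent (@sched_word_time w s) ?Xs_s //.
  by move=> i ij; apply: IH => //; exact: ltn_trans jm.
apply: (@eq_from_nth _ x0); rewrite size_sent_seq // => i im.
by rewrite nth_sent_seq // sent_s.
Qed.

Definition word_times s m := map (word_time s) (iota 0 m).

Lemma index_word_times s m j : (j < m)%N -> index (word_time s j) (word_times s m) = j.
Proof.
move=> jm; rewrite /word_times (index_map (@word_time_inj s)).
have {1}-> : j = nth 0%N (iota 0 m) j by rewrite nth_iota.
by rewrite index_uniq ?size_iota ?iota_uniq.
Qed.

Lemma sent_seq_cylinder m s : size s = m ->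
  [set w | sent_seq m w = s] =
  \bigcap_(i in [set` word_times s m])
    (Xs i @^-1` [set nth x0 s (index i (word_times s m))]).
Proof.
move=> sm; apply/seteqP; split => w /=.
  move=> /(sent_seqP w sm) Xs_s i /= /mapP [j]; rewrite mem_iota => /andP [_ jm] ->.
  by rewrite index_word_times // Xs_s.
move=> Xs_s; apply/(sent_seqP w sm) => j jm.
have jS : [set` word_times s m] (word_time s j) by rewrite /= map_f // mem_iota.
by have := Xs_s _ jS; rewrite /= index_word_times.
Qed.

Lemma measurable_sent_seq_eq m s : size s = m -> measurable [set w | sent_seq m w = s].
Proof.
move=> sm; rewrite sent_seq_cylinder //.
by apply: fin_bigcap_measurable; [exact: finite_seq | move=> i _; exact: Xs_measurable].
Qed.

Lemma prob_sent_seq_eq m s : size s = m ->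
  Pr [set w | sent_seq m w = s] = (\prod_(b <- s) P b)%:E.
Proof.
move=> sm; rewrite sent_seq_cylinder // Xs_indep; last first.
  by rewrite /word_times (map_inj_uniq (@word_time_inj s)) iota_uniq.
rewrite /word_times big_map (big_nth x0) sm -prodEFin /index_iota subn0.
apply: eq_big_seq => j; rewrite mem_iota => /andP [_ jm].
by rewrite -/(word_times s m) index_word_times // Xs_law.
Qed.

Lemma prob_sent_seq m (A : pred (seq X)) :
  measurable [set w | A (sent_seq m w)] /\
  Pr [set w | A (sent_seq m w)] = (iid_expect P m (fun s => (A s)%:R))%:E.
Proof.
pose E (l : seq (seq X)) := [set w | sent_seq m w \in l /\ A (sent_seq m w)].
suff E_words : forall l, uniq l -> all (fun s => size s == m) l ->
    measurable (E l) /\ Pr (E l) = (\sum_(s <- l | A s) \prod_(b <- s) P b)%:E.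
  have -> : [set w | A (sent_seq m w)] = E (words X m).
    apply/seteqP; split => w; rewrite /E /= mem_words size_sent_seq //.
    by move=> [].
  have all_m : all (fun s => size s == m) (words X m) by apply/allP => s; rewrite mem_words.
  have [mE ->] := E_words _ (uniq_words X m) all_m; split=> //.
  rewrite iid_expect_words big_mkcond /=; congr (_%:E).
  by apply: eq_bigr => s _; case: (A s); rewrite ?mulr1 ?mulr0.
elim=> [|s l IH] /=.
  have -> : E [::] = set0 by apply/seteqP; split => w // [].
  by move=> _ _; rewrite big_nil measure0.
move=> /andP [s_l uniq_l] /andP [/eqP sm size_l]; have [mEl PEl] := IH uniq_l size_l.
rewrite big_cons; case: ifPn => As; last first.
  suff -> : E (s :: l) = E l by [].
  apply/seteqP; split => w [+ Aw]; rewrite /E /= ?in_cons.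
    by case/orP => [/eqP wm|wl] //; move: As; rewrite -wm Aw.
  by move=> wl; rewrite wl orbT.
have -> : E (s :: l) = [set w | sent_seq m w = s] `|` E l.
  apply/seteqP; split => w; rewrite /E /= in_cons.
    by move=> -[/orP [/eqP|wl] Aw]; [left | right].
  by move=> -[->|[-> Aw]]; [rewrite eqxx | rewrite orbT].
have mS := measurable_sent_seq_eq sm.
split; first exact: measurableU.
rewrite EFinD -(prob_sent_seq_eq sm) -PEl; apply: measureU => //.
by apply/seteqP; split => // w [/= ws [wl _]]; move: s_l; rewrite -ws wl.
Qed.

Lemma negligible_sent_seq_infinitely_often (A : nat -> pred (seq X)) (m : nat -> nat) (C : R) :
  0 <= C ->
  (forall n, (0 < n)%N -> iid_expect P (m n) (fun s => (A n s)%:R) <= C / n%:R ^+ 2) ->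
  Pr.-negligible [set w | ~ exists N, forall k, (N <= k)%N -> ~ A k.+1 (sent_seq (m k.+1) w)].
Proof.
move=> C_ge0 A_le.
apply: (negligible_infinitely_often (F := fun k => [set w | A k.+1 (sent_seq (m k.+1) w)]) C_ge0).
  by move=> k; have [] := prob_sent_seq (m k.+1) (A k.+1).
move=> k; have [_ PA] := prob_sent_seq (m k.+1) (A k.+1).
apply: (@le_trans _ _ (iid_expect P (m k.+1) (fun s => (A k.+1 s)%:R))%:E).
  by rewrite -PA; exact: lexx.
by rewrite lee_fin A_le.
Qed.

Lemma ae_mean_cvg_sent_seq (m : nat -> nat) (S : nat -> seq X -> R)
    (u : nat -> T -> R) (c K : R) :
  0 <= K ->
  (forall n w, \sum_(k < n) u k w = S n (sent_seq (m n) w)) ->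
  (forall n eps, 0 < eps -> (0 < n)%N ->
     iid_expect P (m n) (fun s => (eps * n%:R <= `|S n s - n%:R * c|)%R%:R)
       <= K / eps ^+ 4 / n%:R ^+ 2) ->
  {ae Pr, forall w, mean_cvg (u ^~ w) c}.
Proof.
move=> K_ge0 uS S_dev.
pose eps i : R := (i.+1)%:R^-1; have eps_gt0 i : 0 < eps i by rewrite invr_gt0.
pose A i n s := (eps i * n%:R <= `|S n s - n%:R * c|)%R.
have : forall i, {ae Pr, forall w,
    exists N, forall k, (N <= k)%N -> ~ A i k.+1 (sent_seq (m k.+1) w)}.
  move=> i; apply: (@negligible_sent_seq_infinitely_often (A i) m (K / eps i ^+ 4)).
    by rewrite divr_ge0 // exprn_ge0 // ltW.
  by move=> n n_gt0; exact: S_dev.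
move=> /ae_foralln; apply: filterS => w eventually_close.
apply: mean_cvg_invn => i; have [N HN] := eventually_close i.
by exists N => n Nn; rewrite ltNge uS; exact/negP/HN.
Qed.

Hypothesis P_ge0 : forall x, 0 <= P x.
Hypothesis P_sum1 : \sum_x P x = 1.

Lemma ae_mean_cvg_sent (g : X -> R) :
  {ae Pr, forall w, mean_cvg (fun k => g (sent k w)) (wmean P g)}.
Proof.
apply: (@ae_mean_cvg_sent_seq id (fun n s => \sum_(b <- s) g b) _ _ (dev4_bound P g)).
- exact: dev4_bound_ge0.
- by move=> n w; rewrite sum_sent_seq.
- by move=> n eps; exact: iid_expect_dev_le.
Qed.

Lemma ae_mean_cvg_sent_even_pairs (g : X -> R) :
  {ae Pr, forall w,
    mean_cvg (fun k => g (sent k.*2 w) * g (sent k.*2.+1 w)) (wmean P g ^+ 2)}.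
Proof.
apply: (@ae_mean_cvg_sent_seq double (pair_sum x0 g) _ _ (pair_dev_bound P g)).
- exact: pair_dev_bound_ge0.
- move=> n w; apply: eq_bigr => k _.
  by rewrite !nth_sent_seq // ?ltn_double ?ltn_Sdouble.
- by move=> n eps; exact: iid_expect_pair_dev_le.
Qed.

Lemma ae_mean_cvg_sent_odd_pairs (g : X -> R) :
  {ae Pr, forall w,
    mean_cvg (fun k => g (sent k.*2.+1 w) * g (sent k.*2.+2 w)) (wmean P g ^+ 2)}.
Proof.
apply: (@ae_mean_cvg_sent_seq (fun n => n.*2.+1) (fun n s => pair_sum x0 g n (behead s))
  _ _ (pair_dev_bound P g)).
- exact: pair_dev_bound_ge0.
- move=> n w; apply: eq_bigr => k _.
  by rewrite !nth_behead !nth_sent_seq // ltnS ?ltn_double // -doubleS leq_double.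
- by move=> n eps; exact: iid_expect_pair_dev_behead_le.
Qed.

Lemma ae_mean_cvg_sent_pairs (g : X -> R) :
  {ae Pr, forall w,
    mean_cvg (fun k => g (sent k w) * g (sent k.+1 w)) (wmean P g ^+ 2)}.
Proof.
apply: filterS2 (ae_mean_cvg_sent_even_pairs g) (ae_mean_cvg_sent_odd_pairs g) => w.
apply: (mean_cvg_even_odd (B := (\sum_x `|g x|) ^+ 2)) => k.
have g_le x : `|g x| <= \sum_x `|g x| by rewrite (bigD1 x) //= lerDl sumr_ge0.
by rewrite normrM expr2 ler_pM.
Qed.

End SentSymbols.

Theorem theorem1 (d : measure_display) (T : measurableType d) (R : realType)
  (Pr : probability T R) (X : finType) (P : X -> R)
  (Xs : nat -> T -> X) (e : X -> seq bool) :
  (1 < #|X|)%N ->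
  (forall x, 0 <= P x) -> \sum_(x : X) P x = 1 ->
  (forall t x, measurable (Xs t @^-1` [set x])) ->
  (forall t x, Pr (Xs t @^-1` [set x]) = (P x)%:E) ->
  mutually_indep Pr Xs ->
  prefix_free e ->
  (forall x, (1 <= codelen e x)%N) ->
  let EL := \sum_(x : X) P x * (codelen e x)%:R in
  let EL2 := \sum_(x : X) P x * ((codelen e x)%:R ^+ 2) in
  {ae Pr, forall w : T,
     avg_age R e (fun t => Xs t w) = (EL + EL2 / (2 * EL) - 2^-1)%:E}.
Proof.
move=> cardX P_ge0 P_sum1 Xs_meas Xs_law Xs_indep _ codelen_ge1 EL EL2.
have [x0 _] : exists x0 : X, x0 \in X by apply/card_gt0P; exact: ltnW.
have EL_ge1 : 1 <= EL.
  by rewrite -P_sum1 /EL; apply: ler_sum => x _; rewrite ler_peMr // ler1n.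
pose len x : R := (codelen e x)%:R.
have len_cvg := ae_mean_cvg_sent x0 Xs_meas Xs_law Xs_indep codelen_ge1 P_ge0 P_sum1 len.
have sqr_cvg := ae_mean_cvg_sent x0 Xs_meas Xs_law Xs_indep codelen_ge1 P_ge0 P_sum1
  (fun x => len x ^+ 2).
have cross_cvg := ae_mean_cvg_sent_pairs x0 Xs_meas Xs_law Xs_indep codelen_ge1 P_ge0 P_sum1 len.
apply: filterS3 len_cvg sqr_cvg cross_cvg => w.
exact: avg_ageE.
Qed.
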